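(* Let $r>0$ and $\sigma>0$, set $k=\frac{2r}{\sigma^2}$, and let $\widetilde{\widetilde{C}}_0:\mathbb{R}\to\mathbb{R}$ be $$\widetilde{\widetilde{C}}_0(x)=\max\left\{e^{\frac{(k+1)x}{2}}-e^{\frac{(k-1)x}{2}},\,0\right\}.$$ Fix $S_0\ge 0$, a positive integer $N_0$, and $\epsilon\in\{-1,1\}$. For $\lambda>0$ define the function $$\mathcal{F}\left(\widetilde{\widetilde{C}}_0,\lambda,N_0\right)(x)=\widetilde{\widetilde{C}}_0(x)+\epsilon\sum_{j=1}^{N_0}\lambda^{-j}\,\widetilde{\widetilde{C}}_0\left(\lambda^{-j}x\right).$$ Then $$\left\|\mathcal{F}\left(\widetilde{\widetilde{C}}_0,\lambda,N_0\right)-\widetilde{\widetilde{C}}_0\right\|^2_{L^2([0,S_0])}\longrightarrow 0\quad\text{as }\lambda\to+\infty,$$ i.e. for every $\varepsilon>0$ there exists $\lambda_0>0$ such that for all $\lambda\ge\lambda_0$ this squared norm is at most $\varepsilon$.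
   Context: $\widetilde{\widetilde{C}}_0$ is the initial datum obtained from the Black–Scholes call payoff after the standard change of variables $x=\ln(S/E)$ transforming the Black–Scholes equation into the heat equation; $r$ is the risk-free rate and $\sigma$ the volatility. $L^2([0,S_0])$ is the usual Lebesgue space on the interval $[0,S_0]$. *)

From Stdlib Require Import Reals.
From Coquelicot Require Import Coquelicot.
Open Scope R_scope.

Definition kBS (r sigma : R) : R := 2 * r / sigma ^ 2.

Definition C0 (r sigma : R) (x : R) : R :=
  Rmax (exp ((kBS r sigma + 1) * x / 2) - exp ((kBS r sigma - 1) * x / 2)) 0.

(* F(C0, lambda, N0)(x) = C0(x) + eps * sum_{j=1}^{N0} lambda^{-j} C0(lambda^{-j} x)
   (sum_f 1 N0 f = f 1 + ... + f N0 for N0 >= 1) *)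
Definition Fpert (r sigma eps lam : R) (N0 : nat) (x : R) : R :=
  C0 r sigma x
  + eps * sum_f 1 N0 (fun j => / lam ^ j * C0 r sigma (/ lam ^ j * x)).

Definition L2sq (S0 : R) (f : R -> R) : R := RInt (fun x => (f x) ^ 2) 0 S0.

(** Up to the sign [eps], [Fpert - C0] is the sum of the dilations
    [x |-> lam^-j C0 (lam^-j x)], [1 <= j <= N0].  For [lam >= 1] the points
    [lam^-j x] stay in [[0, S0]], where the continuous function [C0] is bounded
    by some [M]; hence the difference is bounded by [N0 M / lam] on [[0, S0]] and
    its squared [L^2] norm by [S0 (N0 M)^2 / lam^2], which tends to [0]. Only the
    continuity of [C0] matters. *)

From Stdlib Require Import Reals Lra Lia.
From Coquelicot Require Import Coquelicot.
Open Scope R_scope.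

Definition dilation_sum (f : R -> R) (lam : R) (N : nat) (x : R) : R :=
  sum_f 1 N (fun j => / lam ^ j * f (/ lam ^ j * x)).

Lemma Rmax_0_r_abs (a : R) : Rmax a 0 = (a + Rabs a) / 2.
Proof. unfold Rmax, Rabs; destruct (Rle_dec a 0), (Rcase_abs a); lra. Qed.

Lemma continuous_Rmax_0_r (u : R -> R) (x : R) :
  continuous u x -> continuous (fun y => Rmax (u y) 0) x.
Proof.
  intro Hu.
  apply continuous_ext with (f := fun y => (u y + Rabs (u y)) * / 2).
  { intro y; now rewrite Rmax_0_r_abs. }
  apply (continuous_mult (fun y => u y + Rabs (u y)) (fun _ => / 2)).
  - apply (continuous_plus u (fun y => Rabs (u y))); auto.
    now apply continuous_Rabs_comp.
  - apply continuous_const.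
Qed.

Lemma continuous_C0 (r sigma x : R) : continuous (C0 r sigma) x.
Proof.
  apply continuous_Rmax_0_r.
  apply (ex_derive_continuous (K := R_AbsRing) (V := R_NormedModule)).
  auto_derive; auto.
Qed.

Lemma continuous_sum_f_R0 (g : nat -> R -> R) (n : nat) (x : R) :
  (forall i, continuous (g i) x) -> continuous (fun y => sum_f_R0 (fun i => g i y) n) x.
Proof.
  intro Hg; induction n as [|n IH]; simpl; auto.
  now apply (continuous_plus (fun y => sum_f_R0 (fun i => g i y) n) (g (S n))).
Qed.

Lemma continuous_dilation_sum (f : R -> R) (lam : R) (N : nat) (x : R) :
  (forall y, continuous f y) -> continuous (dilation_sum f lam N) x.
Proof.
  intro Hf; apply continuous_sum_f_R0; intro i.
  set (c := / lam ^ (i + 1)).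
  apply (continuous_mult (fun _ => c) (fun y => f (c * y))).
  - apply continuous_const.
  - apply (continuous_comp (fun y => c * y) f); auto.
    apply (continuous_mult (fun _ => c) (fun y => y)).
    + apply continuous_const.
    + apply continuous_id.
Qed.

Lemma sum_f_R0_abs_le (u : nat -> R) (c : R) (n : nat) :
  (forall i, (i <= n)%nat -> Rabs (u i) <= c) -> Rabs (sum_f_R0 u n) <= c * INR (S n).
Proof.
  intro Hu; rewrite <- sum_cte.
  eapply Rle_trans; [apply sum_f_R0_triangle | now apply sum_Rle].
Qed.

Lemma continuous_abs_bounded_on (f : R -> R) (a b : R) :
  a <= b -> (forall x, continuous f x) ->
  exists M, forall x, a <= x <= b -> Rabs (f x) <= M.
Proof.
  intros Hab Hf.
  destruct (continuity_ab_maj (fun x => Rabs (f x)) a b Hab) as [xM [HxM _]].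
  - intros c _; apply continuity_pt_filterlim, continuous_Rabs_comp, Hf.
  - now exists (Rabs (f xM)).
Qed.

Lemma inv_pow_between (lam : R) (j : nat) :
  1 <= lam -> (1 <= j)%nat -> 0 < / lam ^ j <= / lam.
Proof.
  intros Hlam Hj; split.
  - apply Rinv_0_lt_compat, pow_lt; lra.
  - apply Rinv_le_contravar; [lra|].
    rewrite <- (pow_1 lam) at 1; now apply Rle_pow.
Qed.

Lemma dilation_sum_abs_le (f : R -> R) (lam L M : R) (N : nat) (x : R) :
  1 <= lam -> (0 < N)%nat -> (forall y, 0 <= y <= L -> Rabs (f y) <= M) ->
  0 <= x <= L -> Rabs (dilation_sum f lam N x) <= INR N * M / lam.
Proof.
  intros Hlam HN Hf Hx.
  (* [sum_f 1 N] is [sum_f_R0] up to [N - 1], i.e. [N] terms only when [N >= 1]. *)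
  replace (INR N * M / lam) with (M / lam * INR (S (N - 1)))
    by (replace (S (N - 1)) with N by lia; field; lra).
  apply sum_f_R0_abs_le; intros i _.
  destruct (inv_pow_between lam (i + 1) Hlam ltac:(lia)) as [Hc0 Hc].
  assert (Hinv1 : / lam <= 1) by (rewrite <- Rinv_1; apply Rinv_le_contravar; lra).
  assert (Hy : 0 <= / lam ^ (i + 1) * x <= L) by (split; nra).
  specialize (Hf _ Hy).
  rewrite Rabs_mult, Rabs_pos_eq by lra.
  assert (0 <= M) by (eapply Rle_trans; [apply Rabs_pos | exact Hf]).
  unfold Rdiv; rewrite Rmult_comm; apply Rmult_le_compat; auto using Rabs_pos; lra.
Qed.

Lemma L2sq_le (L B : R) (h : R -> R) :
  0 <= L -> (forall x, continuous h x) -> (forall x, 0 <= x <= L -> Rabs (h x) <= B) ->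
  L2sq L h <= L * B ^ 2.
Proof.
  intros HL Hh HB; unfold L2sq.
  replace (L * B ^ 2) with (RInt (fun _ => B ^ 2) 0 L)
    by (rewrite RInt_const; unfold scal; simpl; unfold mult; simpl; ring).
  apply RInt_le; auto.
  - apply (ex_RInt_continuous (V := R_CompleteNormedModule)); intros z _.
    apply continuous_ext with (f := fun x => mult (h x) (mult (h x) 1)).
    { intro; reflexivity. }
    apply (continuous_mult (K := R_AbsRing) h (fun x => mult (h x) 1)); auto.
    apply (continuous_mult (K := R_AbsRing) h (fun _ => 1)); auto using continuous_const.
  - apply (ex_RInt_const (V := R_CompleteNormedModule)).
  - intros x Hx; rewrite <- (pow2_abs (h x)).
    apply pow_incr; split; [apply Rabs_pos | apply HB; lra].
Qed.

Theorem L2sq_dilation_sum_small (f : R -> R) (L : R) (N : nat) (e : R) :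
  (forall x, continuous f x) -> 0 <= L -> (0 < N)%nat -> 0 < e ->
  exists lam0, 0 < lam0 /\ forall lam, lam0 <= lam -> L2sq L (dilation_sum f lam N) <= e.
Proof.
  intros Hf HL HN He.
  destruct (continuous_abs_bounded_on f 0 L HL Hf) as [M HM].
  set (c := L * (INR N * M) ^ 2).
  assert (Hc : 0 <= c) by (apply Rmult_le_pos; auto using pow2_ge_0).
  assert (Hce : 0 <= c / e) by (apply Rdiv_le_0_compat; lra).
  (* [lam >= c / e] gives [c / lam <= e], and [lam >= 1] gives [c / lam^2 <= c / lam]. *)
  exists (1 + c / e); split; [lra|]; intros lam Hlam.
  eapply Rle_trans.
  { apply L2sq_le; auto using continuous_dilation_sum.
    intros x Hx; apply dilation_sum_abs_le with (L := L); auto; lra. }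
  replace (L * (INR N * M / lam) ^ 2) with (c / lam ^ 2) by (unfold c; field; lra).
  assert (Hc_e : c / e * e = c) by (field; lra).
  assert (Hcl : c <= e * lam) by nra.
  apply (Rmult_le_reg_r (lam ^ 2)); [apply pow_lt; lra|].
  replace (c / lam ^ 2 * lam ^ 2) with c by (field; lra).
  nra.
Qed.

Theorem proposition1 (r sigma S0 eps : R) (N0 : nat) :
  0 < r -> 0 < sigma -> 0 <= S0 -> (0 < N0)%nat -> (eps = 1 \/ eps = -1) ->
  forall e : R, 0 < e ->
  exists lam0 : R, 0 < lam0 /\
    forall lam : R, lam0 <= lam ->
      L2sq S0 (fun x => Fpert r sigma eps lam N0 x - C0 r sigma x) <= e.
Proof.
  intros _ _ HS0 HN0 Heps e He.
  destruct (L2sq_dilation_sum_small (C0 r sigma) S0 N0 e (continuous_C0 r sigma) HS0 HN0 He)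
    as [lam0 [Hlam0 Hsmall]].
  exists lam0; split; auto; intros lam Hlam.
  replace (L2sq S0 _) with (L2sq S0 (dilation_sum (C0 r sigma) lam N0)); auto.
  unfold L2sq; apply RInt_ext; intros x _; simpl.
  unfold Fpert, dilation_sum; destruct Heps as [-> | ->]; ring.
Qed.
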